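(* Let $a,b,u,v$ be integers with $b>a\ge2$ and $u,v\ge2$, and set $X:=ab-a-b$. Suppose that (1) $a$, $b$ and $uv-1$ are pairwise coprime; (2) $\frac{1}{a}+\frac{1}{b}+\frac{v}{uv-1}>1$; (3) $vab-1=(uv-1)X$. If $u=2$ then $2\le a\le5$, and if $u=3$ then $a\in\{2,3\}$. *)

From mathcomp Require Import all_boot all_order all_algebra.
Set Implicit Arguments. Unset Strict Implicit. Unset Printing Implicit Defensive.

From mathcomp Require Import all_boot all_order all_algebra.
From mathcomp Require Import ring lra zify.
Import Order.TTheory GRing.Theory Num.Theory.
Set Implicit Arguments. Unset Strict Implicit. Unset Printing Implicit Defensive.
Local Open Scope ring_scope.

(* Only the inequality (2) is needed.  The map v |-> v / (u v - 1) is
   decreasing, so its value is at most 2 / (2u - 1), and 1/a + 1/b < 2/a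
   since a < b.  Hence 1 < 2/a + 2/(2u - 1), i.e. a (2u - 3) < 2 (2u - 1):
   a < 6 for u = 2 and 3a < 10 for u = 3. *)

Section EgyptianBound.
Variable R : realFieldType.

Lemma ler_ratio_at_two (u v : R) :
  2 <= u -> 2 <= v -> v / (u * v - 1) <= 2 / (2 * u - 1).
Proof.
move=> hu hv.
have uv_gt0 : 0 < u * v - 1 by nra.
rewrite ler_pdivrMr // mulrAC ler_pdivlMr; [nra | lra].
Qed.

Lemma ltr_invD_double (a b : R) : 0 < a -> a < b -> a^-1 + b^-1 < 2 / a.
Proof.
move=> a_gt0 ab; have b_gt0 : 0 < b by lra.
suff : b^-1 < a^-1 by lra.
by rewrite ltf_pV2 ?posrE.
Qed.

Lemma egyptian_bound (a b u v : R) :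
  0 < a -> a < b -> 2 <= u -> 2 <= v ->
  1 < a^-1 + b^-1 + v / (u * v - 1) -> a * (2 * u - 3) < 2 * (2 * u - 1).
Proof.
move=> a_gt0 ab hu hv hsum.
have hab := ltr_invD_double a_gt0 ab.
have huv := ler_ratio_at_two hu hv.
have w_gt0 : 0 < 2 * u - 1 by lra.
have : (2 * u - 3) / (2 * u - 1) < 2 / a.
  suff -> : (2 * u - 3) / (2 * u - 1) = 1 - 2 / (2 * u - 1) by lra.
  by field; rewrite gt_eqF.
by rewrite ltr_pdivrMr // mulrAC ltr_pdivlMr // mulrC.
Qed.

End EgyptianBound.

Theorem lemma3p5 (a b u v : int)
  (ha : 2 <= a) (hab : a < b) (hu : 2 <= u) (hv : 2 <= v)
  (hcop_ab : coprimez a b)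
  (hcop_a : coprimez a (u * v - 1))
  (hcop_b : coprimez b (u * v - 1))
  (hineq : 1 < (a%:~R : rat)^-1 + (b%:~R : rat)^-1
               + (v%:~R : rat) / ((u * v - 1)%:~R : rat))
  (heq : v * a * b - 1 = (u * v - 1) * (a * b - a - b)) :
  (u = 2 -> 2 <= a <= 5) /\ (u = 3 -> a = 2 \/ a = 3).
Proof.
have : a * (2 * u - 3) < 2 * (2 * u - 1).
  rewrite -(ltr_int rat) !(rmorphM, rmorphB) /= !rmorph1.
  rewrite !(rmorphM, rmorphB) /= rmorph1 in hineq.
  apply: egyptian_bound hineq; rewrite ?ltr0z ?ltr_int ?(ler_int rat 2) //.
  lia.
by move=> bound; split=> ?; subst u; lia.
Qed.
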